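(* Let $p\in(0,\infty)$, $\omega^0\in\mathbb Z^V$, let $\gamma\subset V$ be a finite nonempty connected set, and let $\omega\in\mathbb Z^V$ satisfy $\omega_v\neq\omega^0_v$ for $v\in\gamma$ and $\omega_v=\omega^0_v$ for $v\notin\gamma$. Let $E_\gamma$ denote the set of edges of $\mathcal T^d$ having at least one endpoint in $\gamma$. Then $$H(\omega)-H(\omega^0):=\sum_{\{v,w\}\in E_\gamma}\Bigl(|\omega_v-\omega_w|^p-|\omega^0_v-\omega^0_w|^p\Bigr)\ \ge\ (dc_p^2-1)\sum_{v\in\gamma}|\omega_v-\omega^0_v|^p-(c_p+1)\sum_{\{v,w\}\in E_\gamma}|\omega^0_v-\omega^0_w|^p,$$ where $c_p=\min\{2^{1-p},1\}$.
   Context: $\mathcal T^d=(V,E)$ is the Cayley tree of order $d\ge2$ (every vertex has $d+1$ neighbours). The excess energy $H(\omega)-H(\omega^0)$ of the $p$-SOS model (edge energy $|\omega_v-\omega_w|^p$) for two configurations differing on finitely many sites is the (finite) sum over edges of the differences of edge energies, which equals the sum over $E_\gamma$ in the claim. *)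

From HB Require Import structures.
From mathcomp Require Import all_boot all_order all_algebra.
From mathcomp Require Import finmap.
From mathcomp Require Import mathcomp_extra boolp classical_sets functions
  cardinality fsbigop reals exp.
Set Implicit Arguments. Unset Strict Implicit. Unset Printing Implicit Defensive.
Import Order.TTheory GRing.Theory Num.Theory.
Local Open Scope classical_set_scope.
Local Open Scope ring_scope.

(* The Cayley tree T^d of order d: the Cayley graph of the free product of
   d+1 copies of Z/2Z.  Vertices are reduced words over the alphabet 'I_(d+1)
   (no two consecutive letters equal); w is adjacent to v iff one is obtained
   from the other by appending one letter.  Every vertex has d+1 neighbours. *)
Definition reduced (d : nat) (s : seq 'I_d.+1) : bool :=
  sorted (fun a b : 'I_d.+1 => a != b) s.

Definition ctree_vertex (d : nat) := {s : seq 'I_d.+1 | reduced s}.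

Definition word_parent (T : Type) (s : seq T) : seq T := take (size s).-1 s.

Definition ctree_adj (d : nat) (v w : ctree_vertex d) : bool :=
  ((sval w != [::]) && (word_parent (sval w) == sval v))
  || ((sval v != [::]) && (word_parent (sval v) == sval w)).

Definition ctree_connected (d : nat) (gamma : set (ctree_vertex d)) : Prop :=
  forall u w, gamma u -> gamma w ->
    exists p : seq (ctree_vertex d),
      [/\ path (@ctree_adj d) u p, last u p = w & forall x, x \in p -> gamma x].

Definition edges_touching (d : nat) (gamma : set (ctree_vertex d))
  : set {fset (ctree_vertex d)} :=
  [set e | exists v w, [/\ ctree_adj v w, e = [fset v; w]%fset
                          & gamma v \/ gamma w]].

(* the two endpoints of an edge e = {v,w} (order irrelevant below) *)
Definition edge_end (d : nat) (e : {fset (ctree_vertex d)}) (i : nat)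
  : ctree_vertex d :=
  nth (exist _ [::] (erefl true)) (enum_fset e) i.

Definition edge_energy (R : realType) (p : R) (d : nat)
  (om : ctree_vertex d -> int) (e : {fset (ctree_vertex d)}) : R :=
  (`|(om (edge_end e 0) - om (edge_end e 1))%:~R| : R) `^ p.

Definition c_p (R : realType) (p : R) : R := Num.min (2 `^ (1 - p)) 1.

(* Every edge touching [gamma] joins a non-root vertex [w] to its parent.  Writing
   the change [om - om0] at the parent as (new edge difference) + (change at [w])
   - (old edge difference) and applying [c_p |s + t|^p <= |s|^p + |t|^p] twice
   bounds [c_p^2] times the change at the parent by the new edge energy, the change
   at [w] and [c_p] times the old edge energy.  Summing over these edges, a vertex
   of [gamma] occurs at least [d] times as a parent (once per child) and at most
   once as a lower end. *)

From HB Require Import structures.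
From mathcomp Require Import all_boot all_order all_algebra.
From mathcomp Require Import finmap.
From mathcomp Require Import mathcomp_extra boolp classical_sets functions
  cardinality fsbigop reals exp.
From mathcomp Require Import interval_inference hoelder.
From mathcomp Require Import ring lra.
Import Order.TTheory GRing.Theory Num.Theory.
Local Open Scope classical_set_scope.
Local Open Scope ring_scope.

Set Implicit Arguments.
Unset Strict Implicit.
Unset Printing Implicit Defensive.

Section powR_inequalities.
Context {R : realType}.
Implicit Types p a b s t y : R.

Lemma powR_midpoint_convex p a b : 1 <= p -> 0 <= a -> 0 <= b ->
  (2^-1 * a + 2^-1 * b) `^ p <= 2^-1 * a `^ p + 2^-1 * b `^ p.
Proof.
move=> p1 a0 b0.
rewrite {2 4}(_ : 2^-1 = 1 - 2^-1 :> R); last by rewrite {2}(splitr 1) div1r addrK.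
by apply: (convex_powR p1 (Itv01 _ _)) => //=;
  rewrite ?inE/= ?in_itv/= ?andbT// ?invr_ge0// invf_le1 ?ler1n.
Qed.

(* Each of [a `^ p] and [b `^ p] dominates its share [(a + b) `^ p * x / (a + b)],
   since [r `^ p >= r] for [r] in [[0, 1]]. *)
Lemma powR_subadditive p a b : 0 < p -> p <= 1 -> 0 <= a -> 0 <= b ->
  (a + b) `^ p <= a `^ p + b `^ p.
Proof.
move=> p0 p1 a0 b0.
have [ab0|abN0] := eqVneq (a + b) 0.
  by rewrite ab0 powR0 ?gt_eqF// addr_ge0// powR_ge0.
have ab_gt0 : 0 < a + b by rewrite lt_neqAle eq_sym abN0 addr_ge0.
have share x : 0 <= x -> x <= a + b -> (a + b) `^ p * (x / (a + b)) <= x `^ p.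
  move=> x0 xab; have [->|xN0] := eqVneq x 0; first by rewrite mul0r powR0 ?gt_eqF.
  have x_gt0 : 0 < x by rewrite lt_neqAle eq_sym xN0.
  have -> : x `^ p = (a + b) `^ p * (x / (a + b)) `^ p.
    by rewrite -powRM ?divr_ge0 ?ltW// mulrCA divff ?mulr1 ?gt_eqF.
  rewrite ler_pM2l ?powR_gt0//; apply: ger1_powR => //.
  by rewrite divr_gt0//= ler_pdivrMr// mul1r.
apply: le_trans (lerD (share a a0 _) (share b b0 _)); last first.
- by rewrite lerDr.
- by rewrite lerDl.
by rewrite -mulrDr -mulrDl divff ?mulr1 ?gt_eqF.
Qed.

Lemma c_p_ge0 p : 0 <= c_p p.
Proof. by rewrite /c_p le_min powR_ge0 ler01. Qed.

Lemma c_pE_ge1 p : 1 <= p -> c_p p = 2 `^ (1 - p).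
Proof.
move=> p1; apply/min_idPl; rewrite -[X in _ <= X](powRr0 2).
by apply: ler_powR; rewrite ?ler1n// subr_le0.
Qed.

Lemma c_pE_le1 p : p <= 1 -> c_p p = 1.
Proof.
move=> p1; apply/min_idPr; rewrite -[X in X <= _](powRr0 2).
by apply: ler_powR; rewrite ?ler1n// subr_ge0.
Qed.

Lemma c_p_powR_normD p s t : 0 < p ->
  c_p p * `|s + t| `^ p <= `|s| `^ p + `|t| `^ p.
Proof.
move=> p0.
have normD : `|s + t| `^ p <= (`|s| + `|t|) `^ p.
  by apply: ge0_ler_powR; rewrite ?nnegrE ?addr_ge0 ?ler_normD// ltW.
have [p1|/ltW p1] := leP 1 p; last first.
  by rewrite c_pE_le1// mul1r (le_trans normD)// powR_subadditive.
rewrite c_pE_ge1//; apply: le_trans (ler_wpM2l (powR_ge0 _ _) normD) _.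
have -> : `|s| + `|t| = 2 * (2^-1 * `|s| + 2^-1 * `|t|).
  by rewrite -mulrDr mulrA divff ?mul1r.
rewrite powRM ?ler0n ?addr_ge0 ?mulr_ge0 ?invr_ge0 ?ler0n//.
rewrite mulrA -powRD; last by apply/implyP => _; rewrite pnatr_eq0.
rewrite subrK powRr1 ?ler0n//.
apply: le_trans (ler_wpM2l (ler0n _ 2)
  (powR_midpoint_convex p1 (normr_ge0 s) (normr_ge0 t))) _.
by rewrite mulrDr !mulrA divff ?mul1r ?pnatr_eq0.
Qed.

Lemma c_p2_powR_normDB p y t b : 0 < p ->
  c_p p ^+ 2 * `|y + t - b| `^ p <= `|y| `^ p + `|t| `^ p + c_p p * `|b| `^ p.
Proof.
move=> p0; have := c_p_powR_normD (y + t) (- b) p0; rewrite normrN => ytb.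
apply: le_trans (_ : c_p p * (`|y + t| `^ p + `|b| `^ p) <= _).
  by rewrite expr2 -mulrA ler_wpM2l ?c_p_ge0.
by rewrite mulrDr lerD2r c_p_powR_normD.
Qed.

End powR_inequalities.

Section cayley_tree.
Variable d : nat.
Local Notation V := (ctree_vertex d).
Implicit Types (v w : V) (gamma : set V).

Lemma reduced_take (s : seq 'I_d.+1) n : reduced s -> reduced (take n s).
Proof. by rewrite /reduced -{1}(cat_take_drop n s) => /cat_sorted2[]. Qed.

Lemma reduced_rcons (s : seq 'I_d.+1) a :
  reduced s -> (s = [::] \/ last a s != a) -> reduced (rcons s a).
Proof. by rewrite /reduced; case: s => [|x s] //= s_red [//|]; rewrite rcons_path s_red. Qed.

Definition parent v : V :=
  exist _ (word_parent (sval v)) (reduced_take _ (proj2_sig v)).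

(* Appending a letter [a] that would repeat the last letter leaves [v] unchanged;
   such letters are never used below. *)
Definition extend v (a : 'I_d.+1) : V :=
  if reduced (rcons (sval v) a) =P true is ReflectT red then exist _ _ red else v.

Lemma size_parent v : size (sval (parent v)) = (size (sval v)).-1.
Proof. by rewrite /= /word_parent size_take; case: (size _) => //= n; rewrite ltnSn. Qed.

Lemma size_parent_lt v : sval v != [::] -> (size (sval (parent v)) < size (sval v))%N.
Proof. by rewrite size_parent; case: (sval v). Qed.

Lemma parent_neq v : sval v != [::] -> parent v != v.
Proof. by move=> /size_parent_lt; apply: contraTneq => ->; rewrite ltnn. Qed.

Lemma extend_parent w : sval w != [::] -> extend (parent w) (last ord0 (sval w)) = w.
Proof.
case: w => s s_red /= s_nonroot; rewrite /extend /=.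
have rcons_parent : rcons (word_parent s) (last ord0 s) = s.
  case/lastP: s s_red s_nonroot => [//|s x] _ _.
  by rewrite /word_parent size_rcons last_rcons /= -!cats1 take_size_cat.
case: eqP => [red|]; last by rewrite rcons_parent s_red.
by apply: val_inj; rewrite /= rcons_parent.
Qed.

Section fresh_letter.
Variables (v : V) (a : 'I_d.+1).
Hypothesis a_fresh : sval v = [::] \/ last a (sval v) != a.

Lemma sval_extend : sval (extend v a) = rcons (sval v) a.
Proof. by rewrite /extend; case: eqP => // -[]; exact: reduced_rcons (proj2_sig v) a_fresh. Qed.

Lemma parent_extend : parent (extend v a) = v.
Proof. by apply: val_inj; rewrite /= sval_extend /word_parent size_rcons -cats1 take_size_cat. Qed.

Lemma extend_nonroot : sval (extend v a) != [::].
Proof. by rewrite sval_extend; case: (sval v). Qed.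

End fresh_letter.

Definition parent_edge w : {fset V} := [fset parent w; w]%fset.

(* Every edge of the tree is [parent_edge w] for a unique non-root [w]. *)
Definition lower_ends gamma : set V :=
  [set w | sval w != [::] /\ (gamma w \/ gamma (parent w))].

Lemma edges_touchingE gamma : edges_touching gamma = parent_edge @` lower_ends gamma.
Proof.
apply/seteqP; split => [e [v [w [vw -> touch]]]|e [w [w_nonroot touch] <-]].
  case/orP: vw => /andP[nonroot /eqP par_eq].
    have pw : parent w = v by apply: val_inj.
    by subst v; exists w => //; split => //; case: touch; [right|left].
  have pv : parent v = w by apply: val_inj.
  by subst w; exists v; [split | rewrite /parent_edge fsetUC].
exists (parent w), w; split => //; first by rewrite /ctree_adj w_nonroot eqxx.
by case: touch; [right|left].
Qed.

Lemma parent_edge_inj w1 w2 : sval w1 != [::] -> sval w2 != [::] ->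
  parent_edge w1 = parent_edge w2 -> w1 = w2.
Proof.
move=> w1_nonroot w2_nonroot edge_eq.
have : w1 \in parent_edge w2 by rewrite -edge_eq fset22.
have : w2 \in parent_edge w1 by rewrite edge_eq fset22.
rewrite !in_fset2 => /orP[/eqP w2_par|/eqP //] /orP[/eqP w1_par|/eqP //].
have := size_parent_lt w1_nonroot; have := size_parent_lt w2_nonroot.
by rewrite -w1_par -w2_par => /ltn_trans/[apply]; rewrite ltnn.
Qed.

Lemma lower_ends_finite gamma : finite_set gamma -> finite_set (lower_ends gamma).
Proof.
move=> gamma_fin.
apply: (@sub_finite_set _ _
  (gamma `|` (fun q : V * 'I_d.+1 => extend q.1 q.2) @` (gamma `*` setT))).
  move=> w [w_nonroot [gw|gpw]]; [by left | right].
  by exists (parent w, last ord0 (sval w)) => //; exact: extend_parent.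
by rewrite finite_setU; split => //; apply/finite_image/finite_setX.
Qed.

(* The [i]-th child of [v] appends the [i]-th letter different from the last
   letter of [v], so [child v i] for [i < d] are [d] distinct children. *)
Definition child_letter v (i : nat) : 'I_d.+1 := inord (bump (last ord0 (sval v)) i).

Definition child v i : V := extend v (child_letter v i).

Lemma child_letterE v i : (i < d)%N -> child_letter v i = bump (last ord0 (sval v)) i :> nat.
Proof.
move=> lt_id; rewrite inordK // (leq_ltn_trans _ (lt_id : (i.+1 < d.+1)%N)) //.
by rewrite /bump; case: (_ <= i)%N.
Qed.

Lemma child_letter_fresh v i : (i < d)%N ->
  sval v = [::] \/ last (child_letter v i) (sval v) != child_letter v i.
Proof.
case E: (sval v) => [|x s] lt_id; [by left | right].
by apply/eqP => /(congr1 val); rewrite /= child_letterE // E; apply/eqP/neq_bump.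
Qed.

Lemma parent_child v i : (i < d)%N -> parent (child v i) = v.
Proof. by move=> /(child_letter_fresh v); apply: parent_extend. Qed.

Lemma child_nonroot v i : (i < d)%N -> sval (child v i) != [::].
Proof. by move=> /(child_letter_fresh v); apply: extend_nonroot. Qed.

Lemma child_inj v v' i j : (i < d)%N -> (j < d)%N ->
  child v i = child v' j -> v = v' /\ i = j.
Proof.
move=> lt_id lt_jd child_eq.
have vv' : v = v' by rewrite -(parent_child v lt_id) child_eq parent_child.
split => //; subst v'; move/(congr1 sval): child_eq.
rewrite !sval_extend; try exact: child_letter_fresh.
by move/rcons_inj => [/(congr1 val)]; rewrite /= !child_letterE //; exact: (can_inj (bumpK _)).
Qed.

End cayley_tree.

Section finite_sums.
Context {R : numDomainType} {I : choiceType}.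
Implicit Types (A B : set I) (F G : I -> R).

Lemma ler_fsum A F G : finite_set A -> (forall i, A i -> F i <= G i) ->
  \sum_(i \in A) F i <= \sum_(i \in A) G i.
Proof.
move=> A_fin FG; rewrite !fsbig_finite// big_seq [leRHS]big_seq.
by apply: ler_sum => i; rewrite in_fset_set// inE => /FG.
Qed.

Lemma ler_fsum_subset A B F : finite_set B -> A `<=` B ->
  (forall i, B i -> 0 <= F i) -> \sum_(i \in A) F i <= \sum_(i \in B) F i.
Proof.
move=> B_fin AB F_ge0; rewrite [leRHS](fsbigID A)// (setIidr AB) lerDl.
by apply: fsumr_ge0 => i [/F_ge0].
Qed.

Lemma fsumrD A F G : finite_set A ->
  \sum_(i \in A) (F i + G i) = \sum_(i \in A) F i + \sum_(i \in A) G i.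
Proof. by move=> A_fin; rewrite !fsbig_finite// big_split. Qed.

Lemma fsumrB A F G : finite_set A ->
  \sum_(i \in A) (F i - G i) = \sum_(i \in A) F i - \sum_(i \in A) G i.
Proof. by move=> A_fin; rewrite !fsbig_finite// sumrB. Qed.

End finite_sums.

Section tree_sums.
Context {R : numDomainType} (d : nat).
Local Notation V := (ctree_vertex d).
Implicit Types (gamma : set V) (f : V -> R).

Lemma fsum_edges_touching gamma (F : {fset V} -> R) :
  \sum_(e \in edges_touching gamma) F e = \sum_(w \in lower_ends gamma) F (parent_edge w).
Proof.
rewrite edges_touchingE fsbig_image // => w1 w2 /[!inE] -[w1_nonroot _] [w2_nonroot _].
exact: parent_edge_inj.
Qed.

Lemma fsum_lower_ends_le gamma f : finite_set gamma ->
  (forall v, gamma v -> 0 <= f v) -> (forall v, ~ gamma v -> f v = 0) ->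
  \sum_(w \in lower_ends gamma) f w <= \sum_(v \in gamma) f v.
Proof.
move=> gamma_fin f_ge0 f_out.
rewrite -(fsbig_widen (lower_ends gamma `&` gamma)) //; last first.
  by move=> w [lw not_lw_gamma]; apply: f_out => gw; apply: not_lw_gamma.
by apply: ler_fsum_subset.
Qed.

(* Every [v] in [gamma] is the parent of its [d] children, all in [lower_ends gamma]. *)
Lemma fsum_lower_ends_parent_ge gamma f : finite_set gamma ->
  (forall v, 0 <= f v) ->
  d%:R * \sum_(v \in gamma) f v <= \sum_(w \in lower_ends gamma) f (parent w).
Proof.
move=> gamma_fin f_ge0.
have children_sub : (fun q : V * nat => child q.1 q.2) @` (gamma `*` `I_d)
    `<=` lower_ends gamma.
  move=> _ [[v i] [gv lt_id] <-] /=.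
  by split; [exact: child_nonroot | right; rewrite parent_child].
apply: le_trans (ler_fsum_subset (lower_ends_finite gamma_fin) children_sub _) => //.
rewrite fsbig_image; last first.
  by move=> [v i] [v' j] /[!inE] -[_ lt_id] [_ lt_jd] /(child_inj lt_id lt_jd) /= [-> ->].
rewrite (eq_fsbigr (fun q => f q.1)); last first.
  by move=> [v i] /[!inE] -[_ lt_id]; rewrite /= parent_child.
rewrite -(@pair_fsbig _ _ _ _ _ _ _ (fun v _ => f v)) // mulr_fsumr.
by apply: ler_fsum => // v _; rewrite -fsbig_ord sumr_const card_ord mulr_natl.
Qed.

End tree_sums.

Lemma edge_energy_fset2 (R : realType) (p : R) d (om : ctree_vertex d -> int)
  (a b : ctree_vertex d) : a != b ->
  edge_energy p om [fset a; b]%fset = `|(om a - om b)%:~R| `^ p.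
Proof.
move=> ab; rewrite /edge_energy /edge_end.
have := cardfs2 a b; rewrite ab => card2.
have := fset_uniq [fset a; b]%fset.
have : a \in enum_fset [fset a; b]%fset by exact: fset21.
have : b \in enum_fset [fset a; b]%fset by exact: fset22.
move: card2; case: (enum_fset _) => [|x [|y [|z l]]] //= _.
rewrite !inE andbT => /orP[/eqP|/eqP] b_eq /orP[/eqP|/eqP] a_eq _; subst a b => //.
- by rewrite eqxx in ab.
- by rewrite -opprB rmorphN normrN.
- by rewrite eqxx in ab.
Qed.

Lemma edge_energy_parent_edge (R : realType) (p : R) d (om : ctree_vertex d -> int)
  (w : ctree_vertex d) : sval w != [::] ->
  edge_energy p om (parent_edge w) = `|(om (parent w) - om w)%:~R| `^ p.
Proof. by move=> w_nonroot; rewrite edge_energy_fset2 // parent_neq. Qed.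

Theorem lemma1 (R : realType) (d : nat) (p : R)
  (om0 om : ctree_vertex d -> int) (gamma : set (ctree_vertex d)) :
  (2 <= d)%N -> 0 < p ->
  finite_set gamma -> gamma !=set0 -> ctree_connected gamma ->
  (forall v, gamma v -> om v != om0 v) ->
  (forall v, ~ gamma v -> om v = om0 v) ->
  \sum_(e \in edges_touching gamma) (edge_energy p om e - edge_energy p om0 e)
  >= (d%:R * c_p p ^+ 2 - 1) *
       \sum_(v \in gamma) (`|(om v - om0 v)%:~R| : R) `^ p
     - (c_p p + 1) * \sum_(e \in edges_touching gamma) edge_energy p om0 e.
Proof.
move=> _ p_gt0 gamma_fin _ _ _ om_out.
have W_fin := lower_ends_finite gamma_fin.
pose X v : R := `|(om v - om0 v)%:~R| `^ p.
pose E (o : ctree_vertex d -> int) w : R := `|(o (parent w) - o w)%:~R| `^ p.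
have energyE o : \sum_(e \in edges_touching gamma) edge_energy p o e =
    \sum_(w \in lower_ends gamma) E o w.
  rewrite fsum_edges_touching; apply: eq_fsbigr => w /[!inE] -[w_nonroot _].
  by rewrite edge_energy_parent_edge.
have E_fin : finite_set (edges_touching gamma).
  by rewrite edges_touchingE; exact: finite_image.
rewrite fsumrB // !energyE.
have per_edge w : lower_ends gamma w ->
    c_p p ^+ 2 * X (parent w) <= E om w + X w + c_p p * E om0 w.
  move=> _; rewrite /X /E.
  have -> : ((om (parent w) - om0 (parent w))%:~R : R) = (om (parent w) - om w)%:~R
      + (om w - om0 w)%:~R - (om0 (parent w) - om0 w)%:~R by rewrite !intrB; ring.
  exact: c_p2_powR_normDB.
have sum_edges : c_p p ^+ 2 * \sum_(w \in lower_ends gamma) X (parent w) <=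
    \sum_(w \in lower_ends gamma) E om w + \sum_(w \in lower_ends gamma) X w
    + c_p p * \sum_(w \in lower_ends gamma) E om0 w.
  by rewrite !mulr_fsumr -!fsumrD //; exact: ler_fsum.
have lower_le : \sum_(w \in lower_ends gamma) X w <= \sum_(v \in gamma) X v.
  apply: fsum_lower_ends_le => // v; first by rewrite powR_ge0.
  by move=> /om_out; rewrite /X => ->; rewrite subrr normr0 powR0 ?gt_eqF.
have parent_ge : c_p p ^+ 2 * (d%:R * \sum_(v \in gamma) X v) <=
    c_p p ^+ 2 * \sum_(w \in lower_ends gamma) X (parent w).
  by rewrite ler_wpM2l ?sqr_ge0 // fsum_lower_ends_parent_ge // => v; rewrite powR_ge0.
have c_ge0 := c_p_ge0 p.
lra.
Qed.
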